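(* There exists $C\in(1,\infty)$ such that for all $m,n,k\in\mathbb N$, $$\P\big(\tau^{(m)}_k\ge n\big)\le\Big(\frac{C\,k\,m}{n(\log m+1)}\wedge1\Big)^{n/m}.$$ Equivalently, for all $m\in\mathbb N$ and $s,t\in(0,\infty)$, $\P\big(\tau^{(m)}_{\lfloor s(\log m+1)\rfloor}\ge tm\big)\le e^{-t\log^+(\frac{t}{Cs})}$.
   Context: Positive reals $r(n)=\frac an(1+o(1))$, $a\in(0,\infty)$, $R_m=\sum_{n\le m}r(n)$; $(T^{(m)}_i)$ i.i.d. with $\P(T^{(m)}_i=n)=\frac{r(n)}{R_m}\mathbf1_{\{1,\dots,m\}}(n)$; $\tau^{(m)}_k=\sum_{i\le k}T^{(m)}_i$. $\log^+x=\max(\log x,0)$. *)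

From Stdlib Require Import Reals Lra Lia.
Open Scope R_scope.

Fixpoint sum1 (f : nat -> R) (m : nat) : R :=
  match m with
  | O => 0
  | S m' => sum1 f m' + f m
  end.

Definition Rsum (r : nat -> R) (m : nat) : R := sum1 r m.

(* P(T^{(m)} = i) = r(i)/R_m for i in {1..m} *)
Definition stepP (r : nat -> R) (m i : nat) : R := r i / Rsum r m.

(* tailP r m k n = P(tau^{(m)}_k >= n), where tau_k = T_1 + ... + T_k with
   T_i i.i.d. of law stepP r m.  Computed by conditioning on the first step:
   P(tau_0 >= n) = [n = 0];
   P(tau_{k+1} >= n) = sum_{i=1}^m P(T=i) P(tau_k >= n - i)
   (truncated subtraction: tau_k >= 0 always). *)
Fixpoint tailP (r : nat -> R) (m k n : nat) : R :=
  match k with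
  | O => if Nat.eqb n 0 then 1 else 0
  | S k' => sum1 (fun i => stepP r m i * tailP r m k' (n - i)) m
  end.

From Stdlib Require Import Reals Lra Lia.
Open Scope R_scope.

(* Chernoff's method.  For [z >= 1], [P(tau_k >= n) <= E[z^T]^k / z^n].  By convexity
   of [i |-> z^i], [z^i <= 1 + (i/m)(z^m - 1)] on [0, m], so [E[z^T] <= 1 + (z^m - 1) E[T]/m].
   Since [n r(n)] is bounded above and below, [R_m] is at least a multiple of the harmonic
   sum, hence of [log m + 1], while [sum_{i <= m} i r(i) = O(m)]; thus
   [E[T] = O(m / (log m + 1))].  For [q = C k m / (n (log m + 1)) < 1] take [z^m = e/q]:
   for [C] large, [E[z^T]^k <= e^{n/m}] and [z^n = (e/q)^{n/m}], which leaves [q^{n/m}]. *)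

Lemma sum1_le (f g : nat -> R) m :
  (forall i, (1 <= i <= m)%nat -> f i <= g i) -> sum1 f m <= sum1 g m.
Proof.
  induction m as [|m IH]; simpl; intros Hfg; [lra|].
  assert (sum1 f m <= sum1 g m) by (apply IH; intros; apply Hfg; lia).
  assert (f (S m) <= g (S m)) by (apply Hfg; lia).
  lra.
Qed.

Lemma sum1_scal (f : nat -> R) c m : sum1 (fun i => c * f i) m = c * sum1 f m.
Proof. induction m as [|m IH]; simpl; [|rewrite IH]; ring. Qed.

Lemma sum1_plus (f g : nat -> R) m :
  sum1 (fun i => f i + g i) m = sum1 f m + sum1 g m.
Proof. induction m as [|m IH]; simpl; [|rewrite IH]; ring. Qed.

Lemma sum1_const c m : sum1 (fun _ => c) m = INR m * c.
Proof. induction m as [|m IH]; [simpl; ring|]. cbn [sum1]. rewrite IH, S_INR; ring. Qed.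

Lemma sum1_nonneg (f : nat -> R) m :
  (forall i, (1 <= i <= m)%nat -> 0 <= f i) -> 0 <= sum1 f m.
Proof. intros Hf. rewrite <- (Rmult_0_r (INR m)), <- sum1_const. now apply sum1_le. Qed.

Lemma sum1_ge_term (f : nat -> R) m i :
  (forall j, (1 <= j <= m)%nat -> 0 <= f j) -> (1 <= i <= m)%nat -> f i <= sum1 f m.
Proof.
  induction m as [|m IH]; intros Hf Hi; [lia|simpl].
  assert (0 <= sum1 f m) by (apply sum1_nonneg; intros; apply Hf; lia).
  assert (0 <= f (S m)) by (apply Hf; lia).
  destruct (Nat.eq_dec i (S m)) as [->|ne]; [lra|].
  assert (f i <= sum1 f m) by (apply IH; [intros; apply Hf|]; lia).
  lra.
Qed.

Lemma pow_sub_1_le z i : 1 <= z -> z ^ i - 1 <= INR i * (z - 1) * z ^ i.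
Proof.
  intros Hz; induction i as [|i IH]; [simpl; lra|].
  rewrite S_INR; simpl pow.
  assert (1 <= z ^ i) by (apply pow_R1_Rle; lra).
  assert (0 <= INR i) by apply pos_INR.
  assert (z * (z ^ i - 1) <= z * (INR i * (z - 1) * z ^ i))
    by (apply Rmult_le_compat_l; lra).
  assert ((z - 1) * 1 <= (z - 1) * (z * z ^ i)) by (apply Rmult_le_compat_l; nra).
  nra.
Qed.

(* Convexity of [i |-> z ^ i]: the chord from [0] to [m] lies above the graph. *)
Lemma pow_chord_le z i m : 1 <= z -> (i <= m)%nat ->
  INR m * (z ^ i - 1) <= INR i * (z ^ m - 1).
Proof.
  intros Hz Him. replace m with (i + (m - i))%nat by lia.
  induction (m - i)%nat as [|d IH]; [rewrite Nat.add_0_r; lra|].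
  rewrite Nat.add_succ_r, S_INR; simpl pow.
  assert (Hi := pow_sub_1_le z i Hz).
  assert (z ^ i <= z ^ (i + d)) by (apply Rle_pow; [lra|lia]).
  assert (0 <= INR i) by apply pos_INR.
  assert (INR i * (z - 1) * z ^ i <= INR i * (z - 1) * z ^ (i + d))
    by (apply Rmult_le_compat_l; [apply Rmult_le_pos|]; lra).
  nra.
Qed.

Lemma ln_le_compat x y : 0 < x -> x <= y -> ln x <= ln y.
Proof.
  intros Hx [Hxy| ->]; [left; now apply ln_increasing | lra].
Qed.

Lemma exp_pow x j : exp x ^ j = exp (INR j * x).
Proof. rewrite <- Rpower_pow by apply exp_pos. unfold Rpower. now rewrite ln_exp. Qed.

Lemma ln_succ_le_harmonic m : ln (INR m + 1) <= sum1 (fun i => / INR i) m.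
Proof.
  induction m as [|m IH]; [simpl; rewrite Rplus_0_l, ln_1; lra|].
  cbn [sum1]. rewrite !S_INR.
  assert (0 <= INR m) by apply pos_INR.
  assert (Hinv : 0 < / (INR m + 1)) by (apply Rinv_0_lt_compat; lra).
  replace (INR m + 1 + 1) with ((INR m + 1) * (1 + / (INR m + 1))) by (field; lra).
  rewrite ln_mult by lra.
  assert (ln (1 + / (INR m + 1)) <= / (INR m + 1)).
  { rewrite <- (ln_exp (/ (INR m + 1))) at 2.
    apply ln_le_compat; [lra | apply exp_ineq1_le]. }
  lra.
Qed.

Lemma harmonic_ge_log m : (1 <= m)%nat ->
  (ln (INR m) + 1) / 2 <= sum1 (fun i => / INR i) m.
Proof.
  intros Hm.
  assert (1 <= sum1 (fun i => / INR i) m).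
  { replace 1 with (/ INR 1) by (simpl; field).
    apply (sum1_ge_term (fun i => / INR i)); [|lia].
    intros i Hi. left. apply Rinv_0_lt_compat, lt_0_INR. lia. }
  assert (ln (INR m) <= ln (INR m + 1))
    by (apply ln_le_compat; [apply lt_0_INR; lia | lra]).
  assert (Hh := ln_succ_le_harmonic m).
  lra.
Qed.

Lemma sum1_weighted_pow_le (p : nat -> R) z m : (1 <= m)%nat -> 1 <= z ->
  (forall i, (1 <= i <= m)%nat -> 0 <= p i) ->
  sum1 (fun i => p i * z ^ i) m
  <= sum1 p m + (z ^ m - 1) / INR m * sum1 (fun i => p i * INR i) m.
Proof.
  intros Hm Hz Hp.
  assert (0 < INR m) by (apply lt_0_INR; lia).
  rewrite <- sum1_scal, <- sum1_plus. apply sum1_le; intros i Hi.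
  assert (Hchord := pow_chord_le z i m Hz ltac:(lia)).
  assert (z ^ i <= 1 + (z ^ m - 1) / INR m * INR i).
  { apply Rmult_le_reg_l with (INR m); [lra|].
    replace (INR m * (1 + (z ^ m - 1) / INR m * INR i))
      with (INR m + INR i * (z ^ m - 1)) by (field; lra).
    lra. }
  replace (p i + (z ^ m - 1) / INR m * (p i * INR i))
    with (p i * (1 + (z ^ m - 1) / INR m * INR i)) by ring.
  apply Rmult_le_compat_l; auto.
Qed.

Section StepLaw.

Variables (r : nat -> R) (m : nat).
Hypothesis step_nonneg : forall i, (1 <= i <= m)%nat -> 0 <= stepP r m i.

Lemma tailP_nonneg k n : 0 <= tailP r m k n.
Proof.
  revert n; induction k as [|k IH]; intros n; simpl.
  - destruct (Nat.eqb n 0); lra.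
  - apply sum1_nonneg; intros i Hi. apply Rmult_le_pos; auto.
Qed.

Lemma tailP_mul_pow_le z k n : 1 <= z ->
  tailP r m k n * z ^ n <= (sum1 (fun i => stepP r m i * z ^ i) m) ^ k.
Proof.
  intros Hz; revert n; induction k as [|k IH]; intros n; simpl.
  - destruct (Nat.eqb_spec n 0) as [->|]; simpl; [lra|].
    assert (0 < z ^ n) by (apply pow_lt; lra). lra.
  - set (M := sum1 (fun i => stepP r m i * z ^ i) m).
    rewrite (Rmult_comm _ (z ^ n)), <- sum1_scal, (Rmult_comm M).
    unfold M at 2; rewrite <- sum1_scal.
    apply sum1_le; intros i Hi.
    set (p := stepP r m i). set (t := tailP r m k (n - i)).
    assert (IHi : t * z ^ (n - i) <= M ^ k) by apply IH.
    (* [n <= (n - i) + i] also holds for the truncated subtraction. *)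
    assert (z ^ n <= z ^ (n - i) * z ^ i) by (rewrite <- pow_add; apply Rle_pow; [lra|lia]).
    assert (0 <= p * t) by (apply Rmult_le_pos; [apply step_nonneg | apply tailP_nonneg]; auto).
    assert (0 <= p * z ^ i) by (apply Rmult_le_pos; [apply step_nonneg; auto | apply pow_le; lra]).
    nra.
Qed.

Lemma tailP_le_1 k n : sum1 (stepP r m) m = 1 -> tailP r m k n <= 1.
Proof.
  intros Hsum.
  assert (H := tailP_mul_pow_le 1 k n (Rle_refl 1)).
  rewrite pow1, Rmult_1_r in H.
  replace (sum1 (fun i => stepP r m i * 1 ^ i) m) with (sum1 (stepP r m) m) in H.
  - now rewrite Hsum, pow1 in H.
  - apply Rle_antisym; apply sum1_le; intros; rewrite pow1, Rmult_1_r; lra.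
Qed.

End StepLaw.

Section BoundedIntensity.

Variables (r : nat -> R) (c A : R).
Hypothesis c_pos : 0 < c.
Hypothesis intensity_bounds : forall i, (1 <= i)%nat -> c <= r i * INR i <= A.

Lemma intensity_pos i : (1 <= i)%nat -> 0 < r i.
Proof.
  intros Hi. destruct (intensity_bounds i Hi) as [Hc _].
  assert (0 < INR i) by (apply lt_0_INR; lia). nra.
Qed.

Lemma Rsum_ge_log m : (1 <= m)%nat -> c * (ln (INR m) + 1) / 2 <= Rsum r m.
Proof.
  intros Hm.
  apply Rle_trans with (sum1 (fun i => c * / INR i) m).
  - rewrite sum1_scal. assert (H := harmonic_ge_log m Hm).
    unfold Rdiv. rewrite Rmult_assoc. apply Rmult_le_compat_l; lra.
  - apply sum1_le; intros i Hi.
    assert (0 < INR i) by (apply lt_0_INR; lia).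
    destruct (intensity_bounds i ltac:(lia)) as [Hc _].
    apply Rmult_le_reg_r with (INR i); [lra|].
    rewrite Rmult_assoc, Rinv_l by lra. lra.
Qed.

Lemma intensity_bound_pos : 0 < A.
Proof. destruct (intensity_bounds 1 (le_n 1)); lra. Qed.

Section FixedRange.

Variable m : nat.
Hypothesis m_pos : (1 <= m)%nat.

Let l := ln (INR m) + 1.

Lemma log_term_ge_1 : 1 <= l.
Proof.
  assert (0 <= ln (INR m)).
  { rewrite <- ln_1. apply ln_le_compat; [lra|]. apply (le_INR 1). lia. }
  unfold l; lra.
Qed.

Lemma Rsum_pos : 0 < Rsum r m.
Proof.
  assert (H := Rsum_ge_log m m_pos). fold l in H.
  assert (H1 := log_term_ge_1). nra.
Qed.

Lemma stepP_nonneg i : (1 <= i <= m)%nat -> 0 <= stepP r m i.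
Proof.
  intros Hi. left. apply Rdiv_lt_0_compat; [apply intensity_pos; lia | apply Rsum_pos].
Qed.

Lemma stepP_sum : sum1 (stepP r m) m = 1.
Proof.
  assert (H := Rsum_pos).
  unfold stepP. rewrite <- (Rinv_r (Rsum r m)) by lra.
  rewrite Rmult_comm, <- sum1_scal. unfold Rdiv.
  apply Rle_antisym; apply sum1_le; intros; lra.
Qed.

Lemma stepP_mean_le :
  sum1 (fun i => stepP r m i * INR i) m <= INR m * (2 * A / (c * l)).
Proof.
  assert (HR := Rsum_ge_log m m_pos). fold l in HR.
  assert (Hl := log_term_ge_1). assert (H0 := Rsum_pos).
  rewrite <- sum1_const. apply sum1_le; intros i Hi.
  destruct (intensity_bounds i ltac:(lia)) as [_ HA].
  unfold stepP. replace (r i / Rsum r m * INR i) with (r i * INR i / Rsum r m) by (field; lra).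
  apply Rle_trans with (A / Rsum r m).
  - unfold Rdiv. apply Rmult_le_compat_r; [left; apply Rinv_0_lt_compat|]; lra.
  - assert (0 <= A) by (destruct (intensity_bounds i ltac:(lia)); lra).
    assert (Hcl : 0 < c * l) by nra.
    apply Rmult_le_reg_r with (Rsum r m * (c * l)); [nra|].
    replace (A / Rsum r m * (Rsum r m * (c * l))) with (A * (c * l)) by (field; lra).
    replace (2 * A / (c * l) * (Rsum r m * (c * l))) with (2 * A * Rsum r m)
      by (field; lra).
    nra.
Qed.

Lemma step_mgf_le z : 1 <= z ->
  sum1 (fun i => stepP r m i * z ^ i) m <= 1 + (z ^ m - 1) * (2 * A / (c * l)).
Proof.
  intros Hz.
  assert (0 < INR m) by (apply lt_0_INR; lia).
  assert (1 <= z ^ m) by (apply pow_R1_Rle; lra).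
  assert (Hl := log_term_ge_1).
  eapply Rle_trans; [apply sum1_weighted_pow_le; auto; apply stepP_nonneg|].
  rewrite stepP_sum. apply Rplus_le_compat_l.
  replace ((z ^ m - 1) * (2 * A / (c * l)))
    with ((z ^ m - 1) / INR m * (INR m * (2 * A / (c * l)))) by (field; repeat split; lra).
  apply Rmult_le_compat_l; [apply Rmult_le_pos; [lra | left; now apply Rinv_0_lt_compat]|].
  apply stepP_mean_le.
Qed.

Section Tail.

Variables (C : R) (k n : nat).
Hypothesis C_large : 2 * exp 1 * A <= C * c.
Hypotheses (k_pos : (1 <= k)%nat) (n_pos : (1 <= n)%nat).

Let q := C * INR k * INR m / (INR n * l).

(* Tilt by [z = exp ((1 - ln q) / m)], so that [z ^ m = e / q]. *)
Lemma tailP_le_pow_ratio : q < 1 -> tailP r m k n <= Rpower q (INR n / INR m).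
Proof.
  intros Hq1.
  assert (Hm0 : 0 < INR m) by (apply lt_0_INR; lia).
  assert (Hn0 : 0 < INR n) by (apply lt_0_INR; lia).
  assert (Hk0 : 0 < INR k) by (apply lt_0_INR; lia).
  assert (Hl := log_term_ge_1).
  assert (HA := intensity_bound_pos).
  assert (HC : 0 < C * c) by (assert (H := exp_pos 1); nra).
  assert (HC0 : 0 < C) by nra.
  assert (Hq : 0 < q).
  { unfold q; apply Rdiv_lt_0_compat; repeat apply Rmult_lt_0_compat; lra. }
  assert (Hlnq : ln q < 0) by (rewrite <- ln_1; now apply ln_increasing).
  set (L := 1 - ln q).
  set (z := exp (L / INR m)).
  assert (Hz : 1 <= z).
  { assert (H := exp_ineq1_le (L / INR m)).
    assert (0 <= L / INR m) by (apply Rmult_le_pos;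
      [unfold L; lra | left; now apply Rinv_0_lt_compat]).
    unfold z; lra. }
  assert (Hzm : z ^ m = exp 1 / q).
  { unfold z, L. rewrite exp_pow.
    replace (INR m * ((1 - ln q) / INR m)) with (1 + - ln q) by (field; lra).
    rewrite exp_plus, exp_Ropp, exp_ln by exact Hq. reflexivity. }
  assert (HM : sum1 (fun i => stepP r m i * z ^ i) m <= exp (INR n / (INR k * INR m))).
  { eapply Rle_trans; [apply step_mgf_le; exact Hz|].
    eapply Rle_trans; [|apply exp_ineq1_le]. apply Rplus_le_compat_l.
    assert (1 <= z ^ m) by (apply pow_R1_Rle; lra).
    assert (0 <= 2 * A / (c * l)) by (left; apply Rdiv_lt_0_compat; nra).
    apply Rle_trans with (exp 1 / q * (2 * A / (c * l))); [apply Rmult_le_compat_r; lra|].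
    replace (exp 1 / q * (2 * A / (c * l)))
      with (2 * exp 1 * A / (C * c) * (INR n / (INR k * INR m)))
      by (unfold q; field; repeat split; lra).
    assert (0 <= INR n / (INR k * INR m)) by (left; apply Rdiv_lt_0_compat; nra).
    rewrite <- (Rmult_1_l (INR n / _)) at 2. apply Rmult_le_compat_r; [lra|].
    apply Rmult_le_reg_r with (C * c); [lra|]. unfold Rdiv.
    rewrite Rmult_assoc, Rinv_l, Rmult_1_r, Rmult_1_l by lra. lra. }
  assert (Hchernoff := tailP_mul_pow_le r m stepP_nonneg z k n Hz).
  assert (HMk : sum1 (fun i => stepP r m i * z ^ i) m ^ k
                <= exp (INR k * (INR n / (INR k * INR m)))).
  { rewrite <- exp_pow. apply pow_incr. split; [|exact HM].
    apply sum1_nonneg; intros i Hi.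
    apply Rmult_le_pos; [now apply stepP_nonneg | apply pow_le; lra]. }
  assert (Hzn : 0 < z ^ n) by (apply pow_lt; lra).
  apply Rle_trans with (exp (INR k * (INR n / (INR k * INR m))) / z ^ n).
  - apply Rmult_le_reg_r with (z ^ n); [lra|].
    unfold Rdiv; rewrite Rmult_assoc, Rinv_l, Rmult_1_r by lra. lra.
  - right. unfold z, Rpower, Rdiv. rewrite exp_pow, <- exp_Ropp, <- exp_plus.
    f_equal. unfold L. field. lra.
Qed.

Lemma tailP_le_Rpower_min : tailP r m k n <= Rpower (Rmin q 1) (INR n / INR m).
Proof.
  destruct (Rlt_or_le q 1) as [Hq1|Hq1].
  - rewrite Rmin_left by lra. now apply tailP_le_pow_ratio.
  - rewrite Rmin_right by lra. unfold Rpower. rewrite ln_1, Rmult_0_r, exp_0.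
    apply tailP_le_1; [apply stepP_nonneg | apply stepP_sum].
Qed.

End Tail.
End FixedRange.
End BoundedIntensity.

Lemma prefix_upper_bound (f : nat -> R) N : exists B, forall i, (i < N)%nat -> f i <= B.
Proof.
  induction N as [|N [B HB]]; [exists 0; intros; lia|].
  exists (Rmax B (f N)); intros i Hi.
  destruct (Nat.eq_dec i N) as [->|]; [apply Rmax_r|].
  eapply Rle_trans; [apply HB; lia | apply Rmax_l].
Qed.

Lemma prefix_lower_bound (f : nat -> R) N : (forall i, (1 <= i)%nat -> 0 < f i) ->
  exists b, 0 < b /\ forall i, (1 <= i < N)%nat -> b <= f i.
Proof.
  intros Hf; induction N as [|N [b [Hb HbN]]]; [exists 1; split; [lra | intros; lia]|].
  destruct (Nat.eq_dec N 0) as [->|HN]; [exists b; split; [exact Hb | intros; lia]|].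
  exists (Rmin b (f N)); split; [apply Rmin_glb_lt; [exact Hb | apply Hf; lia]|].
  intros i Hi. destruct (Nat.eq_dec i N) as [->|]; [apply Rmin_r|].
  eapply Rle_trans; [apply Rmin_l | apply HbN; lia].
Qed.

Lemma intensity_bounds_of_equiv (r : nat -> R) a : 0 < a ->
  (forall n, (1 <= n)%nat -> 0 < r n) ->
  Un_cv (fun n => r n * INR n / a) 1 ->
  exists c A, 0 < c /\ forall i, (1 <= i)%nat -> c <= r i * INR i <= A.
Proof.
  intros Ha Hr Hcv.
  destruct (Hcv (1 / 2)) as [N HN]; [lra|].
  destruct (prefix_upper_bound (fun i => r i * INR i) N) as [B HB].
  destruct (prefix_lower_bound (fun i => r i * INR i) N) as [b [Hb HbN]].
  { intros i Hi. apply Rmult_lt_0_compat; [auto | apply lt_0_INR; lia]. }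
  exists (Rmin b (a / 2)), (Rmax B (3 * a / 2)). split; [apply Rmin_glb_lt; lra|].
  intros i Hi. destruct (Nat.lt_ge_cases i N) as [HiN|HiN].
  - split; [eapply Rle_trans; [apply Rmin_l | apply HbN; lia]|].
    eapply Rle_trans; [apply HB; auto | apply Rmax_l].
  - assert (Hi' := HN i HiN). unfold R_dist in Hi'. apply Rabs_def2 in Hi'.
    replace (r i * INR i) with (a * (r i * INR i / a)) by (field; lra).
    split; [eapply Rle_trans; [apply Rmin_r|] | eapply Rle_trans; [|apply Rmax_r]]; nra.
Qed.

Theorem mainTheorem14 :
  forall (r : nat -> R) (a : R),
    0 < a ->
    (forall n : nat, (1 <= n)%nat -> 0 < r n) ->
    (* r(n) = (a/n)(1 + o(1)) *)
    Un_cv (fun n : nat => r n * INR n / a) 1 ->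
    exists C : R, 1 < C /\
      forall m n k : nat, (1 <= m)%nat -> (1 <= n)%nat -> (1 <= k)%nat ->
        tailP r m k n <=
        Rpower (Rmin (C * INR k * INR m / (INR n * (ln (INR m) + 1))) 1)
               (INR n / INR m).
Proof.
  intros r a Ha Hr Hcv.
  destruct (intensity_bounds_of_equiv r a Ha Hr Hcv) as [c [A [Hc Hbounds]]].
  exists (2 * exp 1 * A / c + 2). split; [|intros m n k Hm Hn Hk].
  - assert (0 < exp 1 * A / c); [|lra].
    apply Rdiv_lt_0_compat; [apply Rmult_lt_0_compat|]; auto using exp_pos.
    apply (intensity_bound_pos r c A Hc Hbounds).
  - apply (tailP_le_Rpower_min r c A Hc Hbounds m Hm); auto.
    replace ((2 * exp 1 * A / c + 2) * c) with (2 * exp 1 * A + 2 * c) by (field; lra).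
    lra.
Qed.
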